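(* Let $p$ be a prime and let $q$ be an integer with $\gcd(q,p)=1$. For $n\geq 1$ let $\Gamma_{p,n,q}$ be the directed graph with vertex set $\mathbb{Z}_{p^n}=\{0,1,\dots,p^n-1\}$ and edge set $$E=\{(x,\, q^y \bmod p^n)\;:\; x\in\mathbb{Z}_{p^n},\ y\in\mathbb{Z}_{\geq 0},\ y\equiv x \pmod{p^n}\},$$ and let $A_n$ be its adjacency matrix, with rows and columns indexed by $0,1,\dots,p^n-1$ in increasing order. Then: (1) If $q$ is a primitive root modulo $p$, then $A_1$ is the $p\times p$ matrix whose first column (index $0$) is zero and all of whose other entries equal $1$. If $q$ is not a primitive root modulo $p$, then $A_1$ is obtained from this matrix by changing some entries $1$ to $0$. (2) For $n>1$, writing $A_n$ in $p\times p$ block form with blocks of size $p^{n-1}\times p^{n-1}$ (block $b\in\{0,\dots,p-1\}$ corresponding to indices $bp^{n-1},\dots,(b+1)p^{n-1}-1$), there exist matrices $B_1^n,\dots,B_p^n\in\mathrm{Mat}_{p^{n-1}\times p^{n-1}}(\mathbb{Z})$ such that $$A_n=\begin{pmatrix} B_1^n & B_2^n &\dots & B_p^n \\ B_1^n & B_2^n &\dots & B_p^n \\ \vdots &\vdots & &\vdots \\ B_1^n & B_2^n &\dots & B_p^n \end{pmatrix}$$ (every block row is the same) and $B_1^n+B_2^n+\dots+B_p^n=A_{n-1}$.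
   Context: Here $q^y \bmod p^n$ denotes the representative of $q^y$ modulo $p^n$ in $\{0,1,\dots,p^n-1\}$. The adjacency matrix has entry $1$ in position $(x,z)$ if $(x,z)$ is an edge and $0$ otherwise. *)

From Stdlib Require Import ClassicalDescription.
From mathcomp Require Import all_boot all_order all_algebra.
Set Implicit Arguments. Unset Strict Implicit. Unset Printing Implicit Defensive.
Import Order.TTheory GRing.Theory Num.Theory.
Local Open Scope ring_scope.

Definition prim_root_mod (p : nat) (q : int) : Prop :=
  (q ^+ p.-1 = 1 %[mod p%:Z])%Z /\
  forall k : nat, (0 < k < p.-1)%N -> (q ^+ k <> 1 %[mod p%:Z])%Z.

Definition edge (p n : nat) (q : int) (x z : nat) : Prop :=
  exists y : nat, (y %% p ^ n = x)%N /\ (q ^+ y %% (p ^ n)%:Z)%Z = z%:Z.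

Definition adjf (p n : nat) (q : int) (x z : nat) : int :=
  if excluded_middle_informative (edge p n q x z) then 1 else 0.

Definition adj (p n : nat) (q : int) : 'M[int]_(p ^ n) :=
  \matrix_(i, j) adjf p n q i j.

Definition J1 (p : nat) : 'M[int]_(p ^ 1) :=
  \matrix_(i, j) (if nat_of_ord j == 0%N then 0 else 1).

From mathcomp Require Import all_boot all_order all_algebra cyclic zify.
From Stdlib Require Import Classical ClassicalDescription.
Import Order.TTheory GRing.Theory Num.Theory.

Set Implicit Arguments.
Unset Strict Implicit.
Unset Printing Implicit Defensive.

(* Fix n and replace q by a natural representative r modulo p^n. Adding a
   multiple of the Euler exponent (p-1)p^(n-1) to y does not change r^y mod p^n,
   yet, since p-1 is invertible mod p, it moves y to any residue mod p^n that
   agrees with y mod p^(n-1). Hence (x, z) is an edge of Gamma_{p,n,q} iff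
   r^y = z mod p^n for some y = x mod p^(n-1). For n = 1 the out-neighbours of
   every vertex are thus the powers of q mod p, i.e. all nonzero residues exactly
   when q is a primitive root. For n > 1 the edge relation only depends on x mod
   p^(n-1), so all block rows coincide; and each edge of Gamma_{p,n-1,q} lifts to
   exactly one block, because for m > 0, y = y' mod p^m and r^y = r^y' mod p^m
   imply r^y = r^y' mod p^(m+1): the quotient w = r^(y'-y) is 1 mod p^m and
   w^(p-1) is 1 mod p^(m+1), which forces w = 1 mod p^(m+1). *)

Lemma eqn_modMl_coprime a m n d : coprime a d -> a * m = a * n %[mod d] -> m = n %[mod d].
Proof.
move=> ad; wlog le_mn: m n / m <= n => [W|].
  by case: (leqP m n) => [|/ltnW] /W // W' /esym/W'.
move=> /eqP; rewrite eq_sym eqn_mod_dvd ?leq_mul2l ?le_mn ?orbT // -mulnBr.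
by rewrite Gauss_dvdr 1?coprime_sym // -eqn_mod_dvd // eq_sym => /eqP.
Qed.

Lemma expn_period_mod r T y s d : r ^ T = 1 %[mod d] -> r ^ (y + s * T) = r ^ y %[mod d].
Proof.
by move=> rT; rewrite expnD (mulnC s) expnM -modnMmr -modnXm rT modnXm exp1n modnMmr muln1.
Qed.

Lemma expn_totient_pfactor p r e : prime p -> coprime r p ->
  r ^ (p.-1 * p ^ e) = 1 %[mod p ^ e.+1].
Proof.
move=> p_pr rp; rewrite -[e]/(e.+1.-1) -totient_pfactor //; apply: Euler_exp_totient.
by rewrite coprime_pexpr.
Qed.

Lemma expn_1addM_mod c K e : (1 + c * K) ^ e = 1 + e * c * K %[mod K * K].
Proof.
elim: e => [|e IH]; first by rewrite expn0 mul0n mul0n.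
rewrite expnS -modnMmr IH modnMmr.
have -> : (1 + c * K) * (1 + e * c * K) = (e * c * c) * (K * K) + (1 + e.+1 * c * K) by lia.
by rewrite modnMDl.
Qed.

Lemma expn_pred_eq1_lift p K w : prime p -> p %| K -> w %% K = 1 ->
  w ^ p.-1 = 1 %[mod p * K] -> w = 1 %[mod p * K].
Proof.
(* Writing w = 1 + c K, w^(p-1) = 1 + (p-1) c K mod p K, and p-1 is a unit mod p. *)
move=> p_pr pK wK; have [K0 | K_gt0] := posnP K; first by move: wK; rewrite K0 modn0 => ->.
have wE : w = 1 + (w %/ K) * K by rewrite {1}(divn_eq w K) wK addnC.
set c := w %/ K in wE *; rewrite wE.
have pK_KK : p * K %| K * K by rewrite dvdn_pmul2r.
rewrite -(modn_dvdm _ pK_KK) expn_1addM_mod modn_dvdm //.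
move/eqP; rewrite eqn_mod_dvd ?leq_addr // addKn dvdn_pmul2r // => p_dvd.
apply/eqP; rewrite eqn_mod_dvd ?leq_addr // addKn dvdn_pmul2r //.
have p_p1 : coprime p p.-1.
  by rewrite prime_coprime // gtnNdvd //; have := prime_gt1 p_pr; lia.
by rewrite -(Gauss_dvdr _ p_p1).
Qed.

Definition pow_edge (d r x z : nat) : Prop := exists y, y %% d = x /\ r ^ y %% d = z.

Lemma pow_edge_dvd d d' r x z : d' %| d ->
  pow_edge d r x z -> pow_edge d' r (x %% d') (z %% d').
Proof. by move=> dvd_d [y [<- <-]]; exists y; rewrite !modn_dvdm. Qed.

Section PowerEdges.

Variables (p r : nat).
Hypotheses (p_pr : prime p) (r_p : coprime r p).

Lemma pow_edge_succE m x z : x < p ^ m.+1 ->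
  pow_edge (p ^ m.+1) r x z <-> exists y, y = x %[mod p ^ m] /\ r ^ y %% p ^ m.+1 = z.
Proof.
move=> x_lt; split=> [[y [<- yz]] | [y [yx <-]]].
  by exists y; rewrite modn_dvdm ?dvdn_exp2l.
set K := p ^ m; have pK : p ^ m.+1 = p * K by rewrite expnS.
set a := x %/ K; set w := y %/ K; set v := x %% K.
have xE : x = a * K + v by apply: divn_eq.
have yE : y = w * K + v by rewrite /v -yx -divn_eq.
(* As (p-1)^2 = 1 mod p, the shift adds (a - w) p^m modulo p^(m+1), turning
   y = w p^m + v into x = a p^m + v. *)
exists (y + (p.-1 * a + w) * (p.-1 * K)); split; last first.
  by rewrite expn_period_mod // expn_totient_pfactor.
have [p' pE] : exists p', p = p'.+2 by exists (p - 2); have := prime_gt1 p_pr; lia.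
have -> : y + (p.-1 * a + w) * (p.-1 * K) = (w + p' * a) * p ^ m.+1 + x.
  by rewrite pK yE xE pE /=; lia.
by rewrite modnMDl modn_small.
Qed.

Lemma pow_edge1E x z : x < p -> pow_edge p r x z <-> exists k, r ^ k %% p = z.
Proof.
move=> x_lt; have := @pow_edge_succE 0 x z; rewrite expn1 => -> //.
by split=> [[y [_ yz]] | [k kz]]; [exists y | exists k; rewrite !modn1].
Qed.

Lemma pow_edge_succ_modl m x z : x < p ^ m.+1 ->
  pow_edge (p ^ m.+1) r x z <-> pow_edge (p ^ m.+1) r (x %% p ^ m) z.
Proof.
have p_gt0 := prime_gt0 p_pr.
move=> x_lt; rewrite !pow_edge_succE ?modn_mod //.
by rewrite (leq_trans (ltn_pmod _ _)) ?expn_gt0 ?p_gt0 ?leq_pexp2l.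
Qed.

Lemma pow_edge_succ_lift m x z : x < p ^ m -> pow_edge (p ^ m) r x z ->
  exists2 z', z' %% p ^ m = z & pow_edge (p ^ m.+1) r x z'.
Proof.
have p_gt0 := prime_gt0 p_pr.
move=> x_lt [y [yx <-]]; exists (r ^ y %% p ^ m.+1); first by rewrite modn_dvdm ?dvdn_exp2l.
apply/pow_edge_succE; last by exists y; rewrite yx modn_small.
by rewrite (leq_trans x_lt) ?leq_pexp2l.
Qed.

Lemma expn_eq_mod_lift m y0 y1 : 0 < m -> y0 = y1 %[mod p ^ m] ->
  r ^ y0 = r ^ y1 %[mod p ^ m] -> r ^ y0 = r ^ y1 %[mod p ^ m.+1].
Proof.
move=> m_gt0; wlog le_y: y0 y1 / y0 <= y1 => [W|].
  by case: (leqP y0 y1) => [|/ltnW] /W // W' /esym/W' W'' /esym/W''.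
set K := p ^ m; have pK : p ^ m.+1 = p * K by rewrite expnS.
move=> /eqP; rewrite eq_sym eqn_mod_dvd // => /dvdnP[d dE] ryK.
have y1E : y1 = y0 + d * K by rewrite -dE subnKC.
set w := r ^ (d * K); have rw : r ^ y1 = r ^ y0 * w by rewrite y1E expnD.
have wK : w %% K = 1.
  have K_gt1 : 1 < K by rewrite -[1](exp1n m) ltn_exp2r ?prime_gt1.
  rewrite -(modn_small K_gt1); apply: (@eqn_modMl_coprime (r ^ y0)).
    by rewrite coprimeXl // coprime_pexpr.
  by rewrite muln1 -rw ryK.
have w_eq1 : w = 1 %[mod p * K].
  apply: (@expn_pred_eq1_lift p K w p_pr) => //; first by rewrite dvdn_exp.
  rewrite /w -expnM (_ : d * K * p.-1 = p.-1 * K * d); last by lia.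
  by rewrite expnM -pK -modnXm expn_totient_pfactor // modnXm exp1n.
by rewrite pK rw -modnMmr w_eq1 modnMmr muln1.
Qed.

Lemma pow_edge_succ_unique m x z z' : 0 < m ->
  pow_edge (p ^ m.+1) r x z -> pow_edge (p ^ m.+1) r x z' -> z = z' %[mod p ^ m] -> z = z'.
Proof.
have dvd_pm : p ^ m %| p ^ m.+1 by rewrite dvdn_exp2l.
move=> m_gt0 [y [yx <-]] [y' [y'x <-]]; rewrite !modn_dvdm // => rr'.
by apply: expn_eq_mod_lift; rewrite // -(modn_dvdm _ dvd_pm) yx -y'x modn_dvdm.
Qed.

End PowerEdges.

Lemma expn_modn_neq0 p r k : prime p -> coprime r p -> r ^ k %% p != 0.
Proof. by move=> p_pr rp; rewrite -/(p %| r ^ k) -prime_coprime // coprime_sym coprimeXl. Qed.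

Lemma expn_modn_surj p r : prime p -> coprime r p ->
    (forall k, 0 < k < p.-1 -> r ^ k %% p != 1) ->
  forall z, 0 < z < p -> exists k, r ^ k %% p = z.
Proof.
move=> p_pr rp r_prim z /andP[z_gt0 z_lt]; have p_gt0 := prime_gt0 p_pr.
pose f (k : 'I_p.-1) : 'I_p := Ordinal (ltn_pmod (r ^ k) p_gt0).
have f_inj : injective f.
  move=> a b /(congr1 val) /= ab; apply: val_inj => /=.
  wlog le_ab : a b ab / a <= b => [W|].
    by case: (leqP a b) => [/(W a b ab) | /ltnW/(W b a (esym ab))/esym].
  apply/eqP; rewrite eqn_leq le_ab /=; apply: contraT; rewrite -ltnNge => lt_ab.
  have rba : r ^ (b - a) = 1 %[mod p].
    apply: (@eqn_modMl_coprime (r ^ a)); first exact: coprimeXl.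
    by rewrite -expnD subnKC ?muln1 // ltnW.
  have := r_prim (b - a); rewrite rba modn_small ?prime_gt1 // eqxx => /implyP.
  by rewrite subn_gt0 lt_ab (leq_ltn_trans (leq_subr _ _)) ?ltn_ord.
pose zero : 'I_p := Ordinal p_gt0.
have im_f : f @: setT = [set~ zero].
  apply/eqP; rewrite eqEcard cardsC1 card_imset // cardsT !card_ord leqnn andbT.
  apply/subsetP => _ /imsetP[k _ ->]; rewrite in_setC1.
  by apply: contraNneq (expn_modn_neq0 k p_pr rp) => /(congr1 val) /= ->.
have : Ordinal z_lt \in f @: setT.
  by rewrite im_f in_setC1; apply: contraTneq z_gt0 => -[->].
by case/imsetP => k _ /(congr1 val) /= ->; exists k.
Qed.

Lemma expn_modn_not_surj p r k0 : prime p -> 0 < k0 < p.-1 -> r ^ k0 %% p = 1 ->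
  exists2 z, 0 < z < p & forall y, r ^ y %% p != z.
Proof.
move=> p_pr /andP[k0_gt0 k0_lt] rk0; have p_gt0 := prime_gt0 p_pr.
pose f (k : 'I_k0) : 'I_p := Ordinal (ltn_pmod (r ^ k) p_gt0).
pose zero : 'I_p := Ordinal p_gt0.
have : ~~ ([set~ zero] \subset f @: setT).
  apply: contraL k0_lt => /subset_leq_card; rewrite cardsC1 card_ord -leqNgt.
  by move=> /leq_trans; apply; rewrite (leq_trans (leq_imset_card _ _)) ?cardsT ?card_ord.
case/subsetPn => z; rewrite in_setC1 => z_neq0 z_im.
exists z; first by rewrite ltn_ord andbT lt0n; apply: contra z_neq0 => /eqP z0; apply/eqP/val_inj.
move=> y; apply: contraNneq z_im => yz; apply/imsetP; exists (Ordinal (ltn_pmod y k0_gt0)) => //.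
apply: val_inj; rewrite /= -yz {1}(divn_eq y k0) addnC expn_period_mod // rk0.
by rewrite modn_small ?prime_gt1.
Qed.

Lemma modz_nat_repr (q : int) (d : nat) : 0 < d -> exists r : nat, (q = r %[mod d])%Z.
Proof.
move=> d_gt0; exists `|(q %% d)%Z|%N.
by rewrite gez0_abs ?modz_mod // modz_ge0 // eqz_nat -lt0n.
Qed.

Lemma modz_dvd_repr (q : int) (r d d' : nat) : d' %| d ->
  (q = r %[mod d])%Z -> (q = r %[mod d'])%Z.
Proof.
move=> dvd_d /eqP qr; apply/eqP; move: qr; rewrite !eqz_mod_dvd.
by apply: dvdz_trans; rewrite dvdzE.
Qed.

Lemma coprimez_repr (q : int) (r d : nat) : coprimez q d -> (q = r %[mod d])%Z -> coprime r d.
Proof. by rewrite /coprimez -gcdz_modl => + qr; rewrite qr gcdz_modl. Qed.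

Lemma expz_modz_repr (q : int) (r d y : nat) :
  (q = r %[mod d])%Z -> (q ^+ y %% d)%Z = (r ^ y %% d)%N.
Proof. by move=> qr; rewrite -modzXm qr modzXm -modz_nat; congr (_ %% _)%Z; lia. Qed.

Lemma edge_pow_edgeE (p n : nat) (q : int) (r x z : nat) :
  (q = r %[mod (p ^ n)%N])%Z -> edge p n q x z <-> pow_edge (p ^ n) r x z.
Proof.
move=> qr; split=> -[y [yx yz]]; exists y; split=> //.
  by move: yz; rewrite (expz_modz_repr y qr) => -[].
by rewrite (expz_modz_repr y qr) yz.
Qed.

Lemma adjf_edge p n q x z : edge p n q x z -> adjf p n q x z = 1%R.
Proof. by rewrite /adjf; case: excluded_middle_informative. Qed.

Lemma adjf_nedge p n q x z : ~ edge p n q x z -> adjf p n q x z = 0%R.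
Proof. by rewrite /adjf; case: excluded_middle_informative. Qed.

Lemma adjf_congr p n q x x' z z' :
  (edge p n q x z <-> edge p n q x' z') -> adjf p n q x z = adjf p n q x' z'.
Proof.
by case: (classic (edge p n q x z)) => e xz; [rewrite !adjf_edge | rewrite !adjf_nedge]; tauto.
Qed.

Section FirstLevel.

Variables (p : nat) (q : int) (r : nat).
Hypotheses (p_pr : prime p) (r_p : coprime r p) (qr : (q = r %[mod p])%Z).

Lemma edge1_pow_edgeE x z : edge p 1 q x z <-> pow_edge p r x z.
Proof.
have qr1 : (q = r %[mod (p ^ 1)%N])%Z by rewrite expn1.
by rewrite (edge_pow_edgeE x z qr1) expn1.
Qed.

Lemma edge1E x z : x < p -> edge p 1 q x z <-> exists k, r ^ k %% p = z.
Proof. by move=> x_lt; rewrite edge1_pow_edgeE pow_edge1E. Qed.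

Lemma edge1_neq0 x z : edge p 1 q x z -> z != 0.
Proof. by rewrite edge1_pow_edgeE => -[y [_ <-]]; apply: expn_modn_neq0. Qed.

Lemma prim_root_modE : prim_root_mod p q <-> forall k, 0 < k < p.-1 -> r ^ k %% p != 1.
Proof.
have qk1E k : (q ^+ k = 1 %[mod p])%Z <-> r ^ k %% p = 1.
  by rewrite (expz_modz_repr k qr) modz_nat (modn_small (prime_gt1 p_pr)); split=> [[]|->].
split=> [[_ q_prim] k /q_prim q_k | r_prim]; first by apply/eqP => /qk1E.
split=> [|k /r_prim /eqP r_k /qk1E //]; apply/qk1E.
have := expn_totient_pfactor 0 p_pr r_p; rewrite muln1 expn1 => ->.
by rewrite modn_small ?prime_gt1.
Qed.

Lemma adj1_le_J1 (i j : 'I_(p ^ 1)) : (adj p 1 q i j <= J1 p i j)%R.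
Proof.
rewrite !mxE; case: (classic (edge p 1 q i j)) => [e | ne].
  by rewrite adjf_edge // (negPf (edge1_neq0 e)).
by rewrite adjf_nedge //; case: ifP.
Qed.

Lemma adj1_prim : prim_root_mod p q -> adj p 1 q = J1 p.
Proof.
have ord_lt (i : 'I_(p ^ 1)) : i < p by rewrite -[p in _ < p]expn1.
move=> /prim_root_modE r_prim; apply/matrixP => i j; rewrite !mxE.
case: eqP => [j0 | /eqP j_neq0]; first by rewrite adjf_nedge // j0 => /edge1_neq0.
rewrite adjf_edge //; apply/edge1E; first exact: ord_lt.
by apply: expn_modn_surj; rewrite // lt0n j_neq0 ord_lt.
Qed.

Lemma adj1_nonprim : ~ prim_root_mod p q -> adj p 1 q <> J1 p.
Proof.
move=> /prim_root_modE not_prim.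
have [k0 k0_range rk0] : exists2 k0, 0 < k0 < p.-1 & r ^ k0 %% p = 1.
  apply: NNPP => no_k0; apply: not_prim => k k_range; apply/eqP => rk.
  by apply: no_k0; exists k.
have [z /andP[z_gt0 z_lt] z_miss] := expn_modn_not_surj p_pr k0_range rk0.
have p_gt0 : 0 < p ^ 1 by rewrite expn1 prime_gt0.
have z_lt1 : z < p ^ 1 by rewrite expn1.
suff z_nedge : ~ edge p 1 q 0 z.
  move=> /matrixP/(_ (Ordinal p_gt0) (Ordinal z_lt1)).
  by rewrite !mxE /= eqn0Ngt z_gt0 adjf_nedge.
by case/(edge1E z (prime_gt0 p_pr)) => k /eqP; apply/negP: (z_miss k).
Qed.

End FirstLevel.

Section SuccessorLevel.

Variables (p : nat) (q : int) (m r : nat).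
Hypotheses (p_pr : prime p) (r_p : coprime r p) (qr : (q = r %[mod (p ^ m.+1)%N])%Z).

Lemma edge_succE x z : edge p m.+1 q x z <-> pow_edge (p ^ m.+1) r x z.
Proof. exact: edge_pow_edgeE. Qed.

Lemma edge_predE x z : edge p m q x z <-> pow_edge (p ^ m) r x z.
Proof. by apply: edge_pow_edgeE; apply: modz_dvd_repr qr; rewrite dvdn_exp2l. Qed.

Lemma adjf_succ_block_row a x z : a < p -> x < p ^ m ->
  adjf p m.+1 q (a * p ^ m + x) z = adjf p m.+1 q x z.
Proof.
move=> a_lt x_lt; apply: adjf_congr; rewrite !edge_succE.
rewrite pow_edge_succ_modl // ?modnMDl ?modn_small //.
rewrite expnS; apply: (@leq_trans (a.+1 * p ^ m)); first by rewrite mulSn addnC ltn_add2r.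
by rewrite leq_mul2r a_lt orbT.
Qed.

Lemma sum_adjf_succ_blocks x z : 0 < m -> x < p ^ m -> z < p ^ m ->
  (\sum_(b < p) adjf p m.+1 q x (b * p ^ m + z) = adjf p m q x z)%R.
Proof.
move=> m_gt0 x_lt z_lt; have pm_gt0 : 0 < p ^ m by rewrite expn_gt0 prime_gt0.
case: (classic (edge p m q x z)) => [e | ne]; last first.
  rewrite adjf_nedge // big1 // => b _; apply: adjf_nedge.
  move=> /edge_succE /(pow_edge_dvd (dvdn_exp2l p (leqnSn m))).
  by rewrite modnMDl !modn_small // => /edge_predE.
have [z' z'z e'] := pow_edge_succ_lift p_pr r_p x_lt (proj1 (edge_predE _ _) e).
have z'_lt : z' < p * p ^ m.
  by case: e' => y [_ <-]; rewrite -expnS ltn_pmod ?expn_gt0 ?prime_gt0.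
have b0_lt : z' %/ p ^ m < p by rewrite ltn_divLR // mulnC.
have z'E : z' = Ordinal b0_lt * p ^ m + z by rewrite /= -z'z -divn_eq.
rewrite adjf_edge // (bigD1 (Ordinal b0_lt)) //= -z'E adjf_edge ?edge_succE //.
rewrite big1 ?addr0 // => b b_neq.
apply: adjf_nedge => /edge_succE e_b; case/eqP: b_neq; apply: val_inj => /=.
have /(pow_edge_succ_unique p_pr r_p m_gt0 e_b e') : b * p ^ m + z = z' %[mod p ^ m].
  by rewrite modnMDl z'z modn_small.
by move=> bz'; apply/eqP; rewrite -(eqn_pmul2r pm_gt0) -(eqn_add2r z) bz' -z'z -divn_eq.
Qed.

End SuccessorLevel.

Local Open Scope ring_scope.

Theorem lemma5 (p : nat) (q : int) (hp : prime p) (hq : coprimez q p%:Z) :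
  (prim_root_mod p q -> adj p 1 q = J1 p) /\
  (~ prim_root_mod p q ->
     (forall i j, adj p 1 q i j <= J1 p i j) /\ adj p 1 q <> J1 p) /\
  (forall n : nat, (1 < n)%N ->
     exists B : 'I_p -> 'M[int]_(p ^ n.-1),
       (forall (a b : 'I_p) (i j : 'I_(p ^ n.-1)),
          adjf p n q (a * p ^ n.-1 + i) (b * p ^ n.-1 + j) = B b i j) /\
       \sum_(b < p) B b = adj p n.-1 q).
Proof.
have [r1 qr1] := modz_nat_repr q (prime_gt0 hp).
have r1_p := coprimez_repr hq qr1.
split; first exact: adj1_prim hp r1_p qr1.
split=> [not_prim | ].
  by split; [exact: adj1_le_J1 hp r1_p qr1 | exact: (adj1_nonprim hp r1_p qr1)].
case=> [|m] //= m_gt0.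
have pm_gt0 : (0 < p ^ m.+1)%N by rewrite expn_gt0 prime_gt0.
have [r qr] := modz_nat_repr q pm_gt0.
have r_p : coprime r p by apply: coprimez_repr hq (modz_dvd_repr (dvdn_exp _ _) qr).
exists (fun b => \matrix_(i, j) adjf p m.+1 q i (b * p ^ m + j)); split.
  by move=> a b i j; rewrite mxE (adjf_succ_block_row hp r_p qr).
apply/matrixP => i j; rewrite summxE !mxE; under eq_bigr do rewrite mxE.
exact: (sum_adjf_succ_blocks hp r_p qr).
Qed.
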